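(* Let $\mathbf{F}_\Phi$ be a two-sided Scissorhand fence over the Cantor space $X$, let $H_X:X\to X$ be a continuous surjection, and let $T:\mathbf{F}_\Phi\to\mathbf{F}_\Phi$ be a continuous lifting of $H_X$. Then: (1) if $H_X$ is transitive, then $T$ is transitive; (2) if $H_X$ is minimal, then $T$ is minimal; (3) if $T$ is a homeomorphism and $H_X$ is chaotic, then $T$ is chaotic.
   Context: For $\Phi=(\varphi^L,\varphi^U)$ with $\varphi^L,\varphi^U:X\to[0,1]$, $\varphi^L$ lower semicontinuous, $\varphi^U$ upper semicontinuous, $\varphi^L\le\varphi^U$, the fence is $\mathbf{F}_\Phi=\{(x,t)\in X\times[0,1]:\varphi^L(x)\le t\le\varphi^U(x)\}$ and $\mathbf{F}_\Phi(x)=\{t:(x,t)\in\mathbf{F}_\Phi\}$. It is a two-sided Scissorhand fence if both graphs $\{(x,\varphi^U(x))\}$ and $\{(x,\varphi^L(x))\}$ are dense in $\mathbf{F}_\Phi$ and $\{x:\varphi^L(x)\ne\varphi^U(x)\}$ is dense in $X$. A map $T$ is a lifting of $H_X$ if $T(x,t)=(H_X(x),s)$ with $s\in\mathbf{F}_\Phi(H_X(x))$ for all $(x,t)\in\mathbf{F}_\Phi$. Transitive: there is a point with dense orbit; minimal: every orbit is dense; chaotic (Devaney): transitive with a dense set of periodic points. *)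

From HB Require Import structures.
From mathcomp Require Import all_boot all_order all_algebra.
From mathcomp Require Import all_classical all_reals all_analysis.
Set Implicit Arguments. Unset Strict Implicit. Unset Printing Implicit Defensive.
Import Order.TTheory GRing.Theory Num.Theory.
Import numFieldTopology.Exports.
Local Open Scope classical_set_scope.
Local Open Scope ring_scope.

Definition lsc {X : topologicalType} {R : realType} (f : X -> R) :=
  forall x (a : R), a < f x -> exists2 V, nbhs x V & forall y, V y -> a < f y.
Definition usc {X : topologicalType} {R : realType} (f : X -> R) :=
  forall x (a : R), f x < a -> exists2 V, nbhs x V & forall y, V y -> f y < a.

Definition admissible_pair {X : topologicalType} {R : realType}
  (phiL phiU : X -> R) :=
  [/\ forall x, 0 <= phiL x <= 1, forall x, 0 <= phiU x <= 1,
      lsc phiL, usc phiU & forall x, phiL x <= phiU x].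

Definition fence {X : Type} {R : realType} (phiL phiU : X -> R) : set (X * R) :=
  [set p | phiL p.1 <= p.2 <= phiU p.1].

Definition dense_in {T : topologicalType} (A B : set T) := B `<=` closure A.

Definition two_sided_scissorhand {X : topologicalType} {R : realType}
  (phiL phiU : X -> R) :=
  [/\ admissible_pair phiL phiU,
      dense_in [set (x, phiU x) | x in setT] (fence phiL phiU),
      dense_in [set (x, phiL x) | x in setT] (fence phiL phiU)
    & dense_in [set x | phiL x != phiU x] setT].

Definition lifting_of {X : Type} {R : realType} (phiL phiU : X -> R)
  (H : X -> X) (T : X * R -> X * R) :=
  forall p, fence phiL phiU p ->
    (T p).1 = H p.1 /\ fence phiL phiU (T p).

Definition orbit {T : Type} (f : T -> T) (p : T) : set T :=
  [set iter n f p | n in setT].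

Definition transitive_on {T : topologicalType} (f : T -> T) (S : set T) :=
  exists2 p, S p & dense_in (orbit f p) S.
Definition minimal_on {T : topologicalType} (f : T -> T) (S : set T) :=
  forall p, S p -> dense_in (orbit f p) S.
Definition periodic_points {T : Type} (f : T -> T) (S : set T) : set T :=
  [set p | S p /\ exists2 n : nat, (0 < n)%N & iter n f p = p].
Definition chaotic_on {T : topologicalType} (f : T -> T) (S : set T) :=
  transitive_on f S /\ dense_in (periodic_points f S) S.

Definition homeomorphism_on {T : topologicalType} (f : T -> T) (S : set T) :=
  [/\ forall p, S p -> S (f p), {within S, continuous f} &
      exists g : T -> T, [/\ forall p, S p -> S (g p), {within S, continuous g},
         forall p, S p -> g (f p) = p & forall p, S p -> f (g p) = p]].

From Pilot Require Import Defs.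
From HB Require Import structures.
From mathcomp Require Import all_boot all_order all_algebra.
From mathcomp Require Import all_classical all_reals all_analysis.
Import Order.TTheory GRing.Theory Num.Theory.
Import numFieldTopology.Exports.
Local Open Scope classical_set_scope.
Local Open Scope ring_scope.

(* Every neighbourhood of a point (x, t) of a two-sided Scissorhand fence
   contains the part of the fence lying over some nonempty open set W of X:
   density of the upper graph gives x1 near x with phiU x1 close to t, upper
   semicontinuity keeps phiU below t + e near x1, and density of the lower
   graph together with lower semicontinuity then give W, over which the fence
   stays inside (t - e, t + e).  Hence a set of fence points whose projection
   is dense in X is dense in the fence.  Orbits of the lifting T project onto
   orbits of H, and a periodic point x of H of period n is the projection of a
   periodic point of T, since t |-> (T^n (x, t)).2 is a continuous self-map of
   the fibre [phiL x, phiU x] and so has a fixed point by the intermediate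
   value theorem. *)

Lemma within_continuous_comp_subspace {U V W : topologicalType}
    {A : set U} {B : set V} {f : U -> V} {g : V -> W} :
  (forall x, A x -> B (f x)) ->
  {within A, continuous f} -> {within B, continuous g} ->
  {within A, continuous (g \o f)}.
Proof.
move=> fAB /subspace_continuousP cf /subspace_continuousP cg.
apply/subspace_continuousP => x Ax.
have fx : f @ within A (nbhs x) --> within B (nbhs (f x)).
  move=> S /(cf x Ax); rewrite /within /= /prop_near1 /nbhs /=.
  by apply: filterS => t Bt At; exact: Bt (fAB _ At).
exact: (cvg_comp _ _ fx (cg _ (fAB _ Ax))).
Qed.

Lemma within_continuous_iter {T : topologicalType} {S : set T} {f : T -> T} n :
  (forall x, S x -> S (f x)) -> {within S, continuous f} ->
  {within S, continuous (iter n f)}.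
Proof.
move=> fS cf; elim: n => [|n IH] /=.
  by apply: continuous_subspaceT => x; exact: cvg_id.
have iterS x : S x -> S (iter n f x) by elim: n {IH} => //= n IHn /IHn /fS.
exact: within_continuous_comp_subspace iterS IH cf.
Qed.

Lemma itv_fixed_point {R : realType} {a b : R} {g : R -> R} :
  a <= b -> {within `[a, b], continuous g} ->
  (forall t, t \in `[a, b] -> g t \in `[a, b]) ->
  exists2 c, c \in `[a, b] & g c = c.
Proof.
move=> ab cg gab.
have cgid : {within `[a, b], continuous (g - id)}.
  by apply: within_continuousB => //; apply: continuous_subspaceT => ?; exact: cvg_id.
have aab : a \in `[a, b] by rewrite in_itv /= lexx ab.
have bab : b \in `[a, b] by rewrite in_itv /= lexx ab.
have [|c cab /eqP] := IVT (v := 0) ab cgid.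
  move: (gab _ aab) (gab _ bab); rewrite !in_itv /= => /andP[ga _] /andP[_ gb].
  by rewrite ge_min le_max !subr_le0 !subr_ge0 gb ga orbT.
by rewrite !subr_eq0 => /eqP; exists c.
Qed.

Lemma dense_graph_meets {X Y : topologicalType} {phi : X -> Y}
    {S : set (X * Y)} {q : X * Y} {A : set X} {B : set Y} :
  dense_in [set (x, phi x) | x in setT] S -> S q -> nbhs q.1 A -> nbhs q.2 B ->
  exists2 x, A x & B (phi x).
Proof.
move=> graph_dense Sq qA qB.
have qAB : nbhs q (A `*` B) by exists (A, B).
by have [_ [[x _ <-] [/= Ax Bx]]] := graph_dense q Sq _ qAB; exists x.
Qed.

Section ScissorhandFence.
Context {X : topologicalType} {R : realType} {phiL phiU : X -> R}.
Hypotheses (phiL_lsc : lsc phiL) (phiU_usc : usc phiU).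
Hypothesis phiL_le_phiU : forall x, phiL x <= phiU x.
Hypothesis graphU_dense : dense_in [set (x, phiU x) | x in setT] (fence phiL phiU).
Hypothesis graphL_dense : dense_in [set (x, phiL x) | x in setT] (fence phiL phiU).

Lemma fence_nbhs_column {q : X * R} {N : set (X * R)} :
  fence phiL phiU q -> nbhs q N ->
  exists (x : X) (W : set X), nbhs x W /\ fence phiL phiU `&` fst @^-1` W `<=` N.
Proof.
move=> Fq [[A B] [/= qA qB] ABN].
move/nbhs_ballP: qB => -[e /= e0 eB].
have ballE y : ball q.2 e y = (q.2 - e < y < q.2 + e) by rewrite -ltr_distlC.
move: qA; rewrite nbhsE => -[A' [oA' A'q] A'A].
have [x1 A'x1] := dense_graph_meets graphU_dense Fq (open_nbhs_nbhs (conj oA' A'q))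
  (nbhsx_ballx _ _ e0).
move=> Bx1; have /andP[_ x1e] : q.2 - e < phiU x1 < q.2 + e by rewrite -ballE.
have [U1 + U1e] := phiU_usc _ _ x1e.
rewrite nbhsE => -[U1' [oU1' U1'x1] U1'U1].
have Fx1 : fence phiL phiU (x1, phiU x1) by rewrite /fence /= phiL_le_phiU lexx.
have [x2 [A'x2 U1'x2] Bx2] := dense_graph_meets graphL_dense Fx1
  (open_nbhs_nbhs (conj (openI oA' oU1') (conj A'x1 U1'x1)))
  (open_nbhs_nbhs (conj (ball_open _ _) Bx1)).
have /andP[x2e _] : q.2 - e < phiL x2 < q.2 + e by rewrite -ballE.
have [U2 x2U2 U2e] := phiL_lsc _ _ x2e.
exists x2, (A' `&` U1' `&` U2); split.
  apply: filterI x2U2.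
  exact: open_nbhs_nbhs (conj (openI oA' oU1') (conj A'x2 U1'x2)).
move=> [z s] [/andP[/= zL zU] [[A'z U1'z] U2z]].
apply: ABN; split; first exact: A'A.
apply: eB; rewrite ballE.
by rewrite (lt_le_trans (U2e _ U2z) zL) (le_lt_trans zU (U1e _ (U1'U1 _ U1'z))).
Qed.

Lemma dense_in_fence {S : set (X * R)} {D : set X} :
  S `<=` fence phiL phiU -> D `<=` fst @` S -> dense_in D setT ->
  dense_in S (fence phiL phiU).
Proof.
move=> SF DS D_dense q Fq N qN.
have [x [W [xW FWN]]] := fence_nbhs_column Fq qN.
have [_ [/DS [p Sp <-] Wp]] := D_dense x I W xW.
by exists p; split => //; apply: FWN; split => //; exact: SF.
Qed.

End ScissorhandFence.

Section Lifting.
Context {X : topologicalType} {R : realType} {phiL phiU : X -> R}.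
Context {H : X -> X} {T : X * R -> X * R}.
Hypothesis T_lifts_H : lifting_of phiL phiU H T.

Lemma lifting_iter p n : fence phiL phiU p ->
  fence phiL phiU (iter n T p) /\ (iter n T p).1 = iter n H p.1.
Proof.
move=> Fp; elim: n => [|n [Fn Tn]] //=.
by have [-> ?] := T_lifts_H _ Fn; rewrite Tn.
Qed.

Lemma orbit_sub_fence p : fence phiL phiU p ->
  Defs.orbit T p `<=` fence phiL phiU.
Proof. by move=> Fp _ [n _ <-]; have [] := lifting_iter p n Fp. Qed.

Lemma orbit_lifting p : fence phiL phiU p ->
  Defs.orbit H p.1 `<=` fst @` Defs.orbit T p.
Proof.
move=> Fp _ [n _ <-]; exists (iter n T p); first by exists n.
by have [] := lifting_iter p n Fp.
Qed.

Hypothesis phiL_le_phiU : forall x, phiL x <= phiU x.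
Hypothesis T_cont : {within fence phiL phiU, continuous T}.

Lemma periodic_points_lifting :
  periodic_points H setT `<=` fst @` periodic_points T (fence phiL phiU).
Proof.
move=> x [_ [n n0 Hnx]].
pose g t := (iter n T (x, t)).2.
have fiber t : t \in `[phiL x, phiU x] -> fence phiL phiU (x, t) by rewrite in_itv.
have Tn t : fence phiL phiU (x, t) ->
    fence phiL phiU (x, g t) /\ iter n T (x, t) = (x, g t).
  move=> /(lifting_iter _ n) [+ Tn1]; rewrite Hnx /= in Tn1.
  by rewrite /g; case: (iter n T (x, t)) Tn1 => _ s /= ->.
have g_cont : {within `[phiL x, phiU x], continuous g}.
  have pair_cont : {within `[phiL x, phiU x], continuous (pair x)}.
    by apply: continuous_subspaceT => t; exact: (cvg_pair (cvg_cst _) cvg_id).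
  have fence_inv p : fence phiL phiU p -> fence phiL phiU (T p).
    by move=> /T_lifts_H [].
  have Tn_cont := within_continuous_iter n fence_inv T_cont.
  have := within_continuous_comp_subspace fiber pair_cont Tn_cont.
  by apply: within_continuous_comp => p _; exact: cvg_snd.
have [|c cx gc] := itv_fixed_point (phiL_le_phiU x) g_cont.
  by move=> t /fiber /Tn [Fg _]; rewrite in_itv.
exists (x, c) => //; split; first exact: fiber.
by exists n => //; have [_ ->] := Tn c (fiber c cx); rewrite gc.
Qed.

End Lifting.

Theorem theorem3p3 (R : realType) (phiL phiU : cantor_space -> R)
  (H : cantor_space -> cantor_space) (T : cantor_space * R -> cantor_space * R) :
  two_sided_scissorhand phiL phiU ->
  continuous H -> (forall y, exists x, H x = y) ->
  lifting_of phiL phiU H T ->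
  {within fence phiL phiU, continuous T} ->
  [/\ transitive_on H setT -> transitive_on T (fence phiL phiU),
      minimal_on H setT -> minimal_on T (fence phiL phiU) &
      homeomorphism_on T (fence phiL phiU) -> chaotic_on H setT ->
        chaotic_on T (fence phiL phiU)].
Proof.
move=> [[_ _ phiL_lsc phiU_usc phiL_le_phiU] graphU_dense graphL_dense _] _ _.
move=> T_lifts_H T_cont.
have fence_dense :=
  dense_in_fence phiL_lsc phiU_usc phiL_le_phiU graphU_dense graphL_dense.
have orbit_dense p : fence phiL phiU p ->
    dense_in (Defs.orbit H p.1) setT -> dense_in (Defs.orbit T p) (fence phiL phiU).
  by move=> Fp; apply: fence_dense (orbit_sub_fence T_lifts_H _ Fp)
    (orbit_lifting T_lifts_H _ Fp).
have transitive : transitive_on H setT -> transitive_on T (fence phiL phiU).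
  move=> [x _ x_dense]; have Fx : fence phiL phiU (x, phiL x).
    by rewrite /fence /= lexx phiL_le_phiU.
  by exists (x, phiL x); last exact: orbit_dense.
split => // [H_minimal p Fp | _ [/transitive T_transitive H_periodic_dense]].
  exact/orbit_dense/H_minimal.
split => //; apply: (fence_dense _ _ _ _ H_periodic_dense); first by move=> p [].
exact: periodic_points_lifting.
Qed.
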